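(* Let $p$ be a prime and $n\ge1$. The Cantor–Bendixson rank of the space ${\rm Sub}(\mathcal{L}_{n,p})$ is equal to the Cantor–Bendixson rank of the poset $\mathcal{Q}$.
   Context: $\mathcal{L}_{n,p}=(\mathbb{Z}/p\mathbb{Z})^n\wr\mathbb{Z}$. ${\rm Sub}(G)$ is the compact space of subgroups of $G$ with topology induced from $\{0,1\}^G$; the Cantor–Bendixson rank of a Polish space $X$ is the least ordinal $\alpha$ with $X^\alpha=X^{\alpha+1}$, where $X^0=X$, $X^{\alpha+1}$ is the set of non-isolated points of $X^\alpha$, and $X^\lambda=\bigcap_{\alpha<\lambda}X^\alpha$ for limit $\lambda$. $\mathcal{Q}$ is the set $\mathbb{N}\times(\mathbb{N}\cup\{0\})$ with the relation $(t',r')<(t,r)$ iff $t'\mid t$ and $t'r'<tr$. For a set $\mathcal{P}$ with a transitive relation: $\mathcal{P}_0$ is the set of minimal elements, $\bar{\mathcal{P}}_0=\mathcal{P}\setminus\mathcal{P}_0$; $\mathcal{P}_{\alpha+1}$ is $\mathcal{P}_\alpha$ together with the minimal elements of $\bar{\mathcal{P}}_\alpha$, $\bar{\mathcal{P}}_{\alpha+1}=\mathcal{P}\setminus\mathcal{P}_{\alpha+1}$; at limits $\mathcal{P}_\beta=\bigcup_{\alpha<\beta}\mathcal{P}_\alpha$, $\bar{\mathcal{P}}_\beta=\bigcap_{\alpha<\beta}\bar{\mathcal{P}}_\alpha$; $r_{CB}(\mathcal{P})$ is the minimal $\alpha$ with $\bar{\mathcal{P}}_\alpha=\bar{\mathcal{P}}_{\alpha+1}$.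 *)

From Stdlib Require List.
From HB Require Import structures.
From mathcomp Require Import all_boot all_order all_algebra.
Set Implicit Arguments. Unset Strict Implicit. Unset Printing Implicit Defensive.
Import Order.TTheory GRing.Theory Num.Theory.

Inductive bord : Type :=
| OZ : bord
| OS : bord -> bord
| OL : (nat -> bord) -> bord.   (* OL f denotes sup_k (f k) *)

Inductive ole : bord -> bord -> Prop :=
| oleZ b : ole OZ b
| oleS a b : olt a b -> ole (OS a) b
| oleL f b : (forall k, ole (f k) b) -> ole (OL f) b
with olt : bord -> bord -> Prop :=
| oltS a b : ole a b -> olt a (OS b)
| oltL a f k : olt a (f k) -> olt a (OL f).

(* The lamplighter group L_{n,p} = (Z/pZ)^n wr Z.                      *)
(* Elements are pairs (f, m), f : Z -> (F_p)^n finitely supported,     *)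
(* m : Z; we work in the ambient type of all pairs and cut out L_{n,p} *)
(* by the finite-support predicate [inL].                              *)
(* (f,a)(g,b) = (f + shift_a g, a + b), (shift_a g)(k) = g (k - a).    *)
Definition lamp (p n : nat) : Type := ((int -> 'rV['F_p]_n) * int)%type.

Definition inL (p n : nat) (x : lamp p n) : Prop :=
  exists N : nat, forall k : int, (N < `|k|)%N -> x.1 k = 0%R.

Definition lone (p n : nat) : lamp p n := (fun _ => 0%R, 0%R).
Definition lmul (p n : nat) (x y : lamp p n) : lamp p n :=
  (fun k => (x.1 k + y.1 (k - x.2))%R, (x.2 + y.2)%R).
Definition linv (p n : nat) (x : lamp p n) : lamp p n :=
  (fun k => (- x.1 (k + x.2))%R, (- x.2)%R).

Definition is_subgroup (p n : nat) (H : lamp p n -> Prop) : Prop :=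
  (forall x, H x -> inL x) /\ H (lone p n) /\
  (forall x y, H x -> H y -> H (lmul x y)) /\
  (forall x, H x -> H (linv x)).

(* Cantor--Bendixson derivatives of a subspace S of {0,1}^G, where G   *)
(* is given as a predicate [dom] on an ambient type T.  The topology   *)
(* of {0,1}^G is the product topology, whose basic open sets are the   *)
(* cylinders fixing the values on a finite subset F of G; thus H is    *)
(* isolated in S iff some cylinder around H meets S only in H.         *)
Definition isolated_in (T : Type) (dom : T -> Prop)
    (S : (T -> Prop) -> Prop) (H : T -> Prop) : Prop :=
  S H /\ exists F : list T, (forall g, List.In g F -> dom g) /\
    forall K, S K -> (forall g, List.In g F -> (K g <-> H g)) -> K = H.

Definition cb_deriv (T : Type) (dom : T -> Prop) (S : (T -> Prop) -> Prop)
  : (T -> Prop) -> Prop := fun H => S H /\ ~ isolated_in dom S H.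

Fixpoint cb_iter (T : Type) (dom : T -> Prop) (X : (T -> Prop) -> Prop)
    (o : bord) : (T -> Prop) -> Prop :=
  match o with
  | OZ => X
  | OS a => cb_deriv dom (cb_iter dom X a)
  | OL f => fun H => forall k, cb_iter dom X (f k) H
  end.

Definition is_CB_rank_space (T : Type) (dom : T -> Prop)
    (X : (T -> Prop) -> Prop) (o : bord) : Prop :=
  cb_iter dom X o = cb_iter dom X (OS o) /\
  forall o', cb_iter dom X o' = cb_iter dom X (OS o') -> ole o o'.

Definition minimal_in (T : Type) (lt : T -> T -> Prop) (S : T -> Prop) :
  T -> Prop := fun x => S x /\ ~ (exists y, S y /\ lt y x).

Fixpoint P_iter (T : Type) (P : T -> Prop) (lt : T -> T -> Prop) (o : bord) :
  T -> Prop :=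
  match o with
  | OZ => minimal_in lt P
  | OS a => fun x => P_iter P lt a x \/
              minimal_in lt (fun y => P y /\ ~ P_iter P lt a y) x
  | OL f => fun x => exists k, P_iter P lt (f k) x
  end.

Definition Pbar_iter (T : Type) (P : T -> Prop) (lt : T -> T -> Prop)
  (o : bord) : T -> Prop := fun x => P x /\ ~ P_iter P lt o x.

Definition is_CB_rank_poset (T : Type) (P : T -> Prop) (lt : T -> T -> Prop)
    (o : bord) : Prop :=
  Pbar_iter P lt o = Pbar_iter P lt (OS o) /\
  forall o', Pbar_iter P lt o' = Pbar_iter P lt (OS o') -> ole o o'.

Definition Qset : nat * nat -> Prop := fun x => (0 < x.1)%N.
Definition Qlt (x y : nat * nat) : Prop :=
  (x.1 %| y.1)%N /\ (x.1 * x.2 < y.1 * y.2)%N.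

From HB Require Import structures.
From mathcomp Require Import all_boot all_order all_algebra.
From mathcomp Require Import zify.
From Stdlib Require Import Classical ClassicalEpsilon.
From Stdlib Require Import FunctionalExtensionality PropExtensionality.
From Stdlib Require List.
Set Implicit Arguments. Unset Strict Implicit. Unset Printing Implicit Defensive.
Import Order.TTheory GRing.Theory Num.Theory.

(* Both ranks are omega.  In [Q] the [m]-th derived set is [{(t, r) | m < t r}],
   so it shrinks at every finite step and is empty in the limit.  In Sub(L_{n,p}),
   the subgroups of the base B = (F_p^n)^(Z) have no isolated points among
   themselves, so they survive every derivative.  Any other subgroup H has a least
   positive translation d, realised by some (g, d) in H; its base H ∩ B is
   invariant under shifting by d and its top blocks stabilise, so H is determined
   by (g, d) and by finitely many elements of its base supported in a window.  A
   subgroup agreeing with H on these elements has a smaller translation or a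
   larger base with more top blocks, so a measure decreases and H has finite rank.
   Conversely, perturbing {0} ⋊ dZ in one residue class mod d at a time gives
   distinct subgroups converging to it, so it lies in the d-th derived set and the
   finite derived sets never stabilise. *)

(** * Iterations of length omega *)

Fixpoint nat_bord (m : nat) : bord :=
  if m is m'.+1 then OS (nat_bord m') else OZ.
Definition bomega := OL nat_bord.

Lemma ole_OL a f k : ole a (f k) -> ole a (OL f).
Proof.
elim: a => [|a IH|g IH] H.
- exact: oleZ.
- inversion H; subst; apply: oleS; apply: oltL; eassumption.
- inversion H; subst; apply: oleL => j; exact: IH.
Qed.

Lemma ole_OS_olt_ole x :
  (forall y, ole x y -> ole x (OS y)) /\ (forall y, olt x y -> ole x y).
Proof.
elim: x => [|a IH|g IH].
- by split=> y _; apply: oleZ.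
- have leS y : ole (OS a) y -> ole (OS a) (OS y).
    by move=> H; inversion H; subst; apply/oleS/oltS/(proj2 IH).
  split=> //; elim=> [|b _|f IHf] H; inversion H; subst.
  + exact: leS.
  + by apply: ole_OL; apply: IHf; eassumption.
- have leS y : ole (OL g) y -> ole (OL g) (OS y).
    by move=> H; inversion H; subst; apply: oleL => k; apply: (proj1 (IH k)).
  split=> //; elim=> [|b _|f IHf] H; inversion H; subst.
  + exact: leS.
  + by apply: ole_OL; apply: IHf; eassumption.
Qed.

Lemma ole_OS x y : ole x y -> ole x (OS y).
Proof. exact: (proj1 (ole_OS_olt_ole x)). Qed.

Lemma olt_ole x y : olt x y -> ole x y.
Proof. exact: (proj2 (ole_OS_olt_ole x)). Qed.

Lemma ole_nat_bord_leq j m x :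
  (j <= m)%N -> ole (nat_bord m) x -> ole (nat_bord j) x.
Proof.
elim: m => [|m IH]; first by rewrite leqn0 => /eqP ->.
rewrite leq_eqVlt ltnS => /orP [/eqP -> //|hj] H.
by apply: IH => //; inversion H; subst; apply: olt_ole.
Qed.

Lemma ole_nat_bord_OS m a : ole (nat_bord m) a -> ole (nat_bord m.+1) (OS a).
Proof. by move=> H; apply/oleS/oltS. Qed.

Definition pbool (P : Prop) : bool :=
  if excluded_middle_informative P then true else false.

Lemma pboolP (P : Prop) : reflect P (pbool P).
Proof. by rewrite /pbool; case: excluded_middle_informative => h; constructor. Qed.

Lemma pred_ext (U : Type) (A B : U -> Prop) : (forall x, A x <-> B x) -> A = B.
Proof.
by move=> h; apply: functional_extensionality => x; apply: propositional_extensionality.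
Qed.

Section RankOmega.
Variables (U : Type) (iter : bord -> U -> Prop) (step : (U -> Prop) -> U -> Prop).
Hypothesis iter_OS : forall a, iter (OS a) = step (iter a).
Hypothesis iter_OL : forall f x, iter (OL f) x <-> forall k, iter (f k) x.
Hypothesis step_sub : forall X x, step X x -> X x.

Lemma iter_nat_bord_antitone j k x :
  (j <= k)%N -> iter (nat_bord k) x -> iter (nat_bord j) x.
Proof.
elim: k => [|k IH]; first by rewrite leqn0 => /eqP ->.
rewrite leq_eqVlt ltnS => /orP [/eqP -> //|hj] H.
by apply: IH => //; move: H; rewrite /= iter_OS; apply: step_sub.
Qed.

Lemma iter_stable_omega m :
  iter (nat_bord m) = iter (nat_bord m.+1) -> iter bomega = iter (nat_bord m).
Proof.
move=> e.
have stable j : iter (nat_bord (m + j)) = iter (nat_bord m).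
  elim: j => [|j IH]; first by rewrite addn0.
  by rewrite addnS /= iter_OS IH -iter_OS.
apply: pred_ext => x; split; first by move/iter_OL.
move=> hx; apply/iter_OL => k; case: (leqP k m) => hk.
  exact: iter_nat_bord_antitone hx.
by rewrite -(subnKC (ltnW hk)) stable.
Qed.

Hypothesis step_omega : step (iter bomega) = iter bomega.
Hypothesis iter_nat_bord_strict : forall m, iter (nat_bord m) <> iter (nat_bord m.+1).

Definition finite_stage o := exists m, iter o = iter (nat_bord m) /\ ole (nat_bord m) o.
Definition omega_stage o := iter o = iter bomega /\ ole bomega o.

Lemma iter_OL_finite_stages f :
  (forall k, finite_stage (f k)) -> finite_stage (OL f) \/ omega_stage (OL f).
Proof.
move=> hall.
pose reached m := exists k, iter (f k) = iter (nat_bord m) /\ ole (nat_bord m) (f k).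
have iter_OLE x : iter (OL f) x <-> forall m, reached m -> iter (nat_bord m) x.
  split=> [/iter_OL hx m [k [<- _]] //|hx]; apply/iter_OL => k.
  by have [m [e o]] := hall k; rewrite e; apply: hx; exists k.
case: (classic (exists B, forall m, reached m -> (m <= B)%N)) => [[B hB]|hunb].
- have ex0 : exists m, pbool (reached m).
    by have [m hm] := hall 0%N; exists m; apply/pboolP; exists 0%N.
  have hB' m : pbool (reached m) -> (m <= B)%N by move/pboolP; apply: hB.
  case: (ex_maxnP ex0 hB') => m0 /pboolP [k0 [e0 o0]] hmax.
  left; exists m0; split; last exact: ole_OL o0.
  apply: pred_ext => x; rewrite iter_OLE; split=> [|hx m hm].
    by move/(_ m0); apply; exists k0.
  by apply: iter_nat_bord_antitone hx; apply/hmax/pboolP.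
- have beyond j : exists m, (j <= m)%N /\ reached m.
    apply: NNPP => hc; apply: hunb; exists j => m hm.
    by rewrite leqNgt; apply/negP => hlt; apply: hc; exists m; rewrite ltnW.
  right; split.
  + apply: pred_ext => x; rewrite iter_OLE; split=> hx.
    * by apply/iter_OL => j; have [m [hm /hx]] := beyond j; apply: iter_nat_bord_antitone.
    * by move=> m _; move/iter_OL: hx.
  + apply: oleL => j; have [m [hm [k [_ o]]]] := beyond j.
    by apply: (ole_OL (k := k)); apply: ole_nat_bord_leq o.
Qed.

Lemma iter_stage o : finite_stage o \/ omega_stage o.
Proof.
elim: o => [|a IH|f IH].
- by left; exists 0%N; split=> //; apply: oleZ.
- case: IH => [[m [e o]]|[e o]].
  + left; exists m.+1; split; last exact: ole_nat_bord_OS.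
    by rewrite iter_OS e -iter_OS.
  + by right; split; [rewrite iter_OS e step_omega | apply: ole_OS].
- case: (classic (exists k, omega_stage (f k))) => [[k [e o]]|hn].
  + right; split; last exact: ole_OL o.
    apply: pred_ext => x; split=> [/iter_OL/(_ k)|hx]; first by rewrite e.
    apply/iter_OL => j; case: (IH j) => [[m [-> _]]|[-> _]] //.
    by move/iter_OL: hx.
  + apply: iter_OL_finite_stages => k; case: (IH k) => // h.
    by exfalso; apply: hn; exists k.
Qed.

Lemma rank_bomega :
  iter bomega = iter (OS bomega) /\
  forall o, iter o = iter (OS o) -> ole bomega o.
Proof.
split; first by rewrite iter_OS step_omega.
move=> o e; case: (iter_stage o) => [[m [em _]]|[_ //]].
by exfalso; apply: (@iter_nat_bord_strict m); rewrite -em e iter_OS em -iter_OS.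
Qed.
End RankOmega.

(** * The poset Q *)

Section PosetRank.
Variables (T : Type) (P : T -> Prop) (lt : T -> T -> Prop).

Lemma Pbar_iter_OS a :
  Pbar_iter P lt (OS a) =
  (fun x => Pbar_iter P lt a x /\ ~ minimal_in lt (Pbar_iter P lt a) x).
Proof.
apply: pred_ext => x; rewrite /Pbar_iter /=; split.
- by move=> [h1 h2]; split; [split=> // h|move=> h]; apply: h2; [left|right].
- by move=> [[h1 h2] h3]; split=> // [[]].
Qed.

Lemma Pbar_iter_OL f x :
  Pbar_iter P lt (OL f) x <-> forall k, Pbar_iter P lt (f k) x.
Proof.
rewrite /Pbar_iter /=; split=> [[h1 h2] k|h]; first by split=> // h; apply: h2; exists k.
by split; [case: (h 0%N) | move=> [k]; case: (h k)].
Qed.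

Lemma Pbar_iter_rank_bomega :
  Pbar_iter P lt bomega = (fun _ => False) ->
  (forall m, Pbar_iter P lt (nat_bord m) <> Pbar_iter P lt (nat_bord m.+1)) ->
  is_CB_rank_poset P lt bomega.
Proof.
move=> empty strict.
apply: (rank_bomega (step := fun X x => X x /\ ~ minimal_in lt X x)) => //.
- exact: Pbar_iter_OS.
- exact: Pbar_iter_OL.
- by move=> X x [].
- by rewrite empty; apply: pred_ext => x; split=> [[]|].
Qed.
End PosetRank.

Lemma Pbar_iter_Q m x :
  Pbar_iter Qset Qlt (nat_bord m) x <-> Qset x /\ (m < x.1 * x.2)%N.
Proof.
elim: m x => [|m IH] x.
- rewrite /Pbar_iter /= /minimal_in /Qset /Qlt; split.
  + move=> [h1 h2]; split=> //; rewrite lt0n; apply/negP => /eqP h0.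
    by apply: h2; split=> // [[y [_ [_]]]]; rewrite h0.
  + by move=> [h1 h2]; split=> // [[_]]; apply; exists (1, 0)%N; rewrite /= dvd1n.
- rewrite /= Pbar_iter_OS; split.
  + move=> [/IH [h1 h2] h3]; split=> //; rewrite ltn_neqAle h2 andbT.
    apply/negP => /eqP he; apply: h3; split; first exact/IH.
    by move=> [y [/IH [_ hy] [_]]]; lia.
  + move=> [h1 h2]; split; first by apply/IH; split=> //; apply: ltnW.
    move=> [_]; apply; exists (1, m.+1)%N; split; first by apply/IH; rewrite /= mul1n.
    by rewrite /Qlt /= dvd1n mul1n.
Qed.

Lemma Q_CB_rank : is_CB_rank_poset Qset Qlt bomega.
Proof.
apply: Pbar_iter_rank_bomega => [|m e].
- apply: pred_ext => x; split=> // /Pbar_iter_OL /(_ (x.1 * x.2)%N) /Pbar_iter_Q.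
  by rewrite ltnn => -[].
- have : Pbar_iter Qset Qlt (nat_bord m) (1, m.+1)%N.
    by apply/Pbar_iter_Q; rewrite /= mul1n.
  by rewrite e => /Pbar_iter_Q [_]; rewrite /= mul1n ltnn.
Qed.

(** * Cantor-Bendixson derivatives *)

Section CBDerivatives.
Variables (T : Type) (dom : T -> Prop) (X : (T -> Prop) -> Prop).

Lemma cb_iter_sub o H : cb_iter dom X o H -> X H.
Proof. by elim: o H => [|a IH|f IH] H //= => [[/IH]|/(_ 0%N)/IH]. Qed.

Lemma perfect_sub_cb_iter (S : (T -> Prop) -> Prop) :
  (forall H, S H -> X H) -> (forall H, S H -> ~ isolated_in dom S H) ->
  forall o H, S H -> cb_iter dom X o H.
Proof.
move=> SX perfect; elim=> [|a IH|f IH] H SH /=; [exact: SX| |by move=> k; apply: IH].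
split; first exact: IH.
move=> [_ [F [domF isoH]]]; apply: (perfect H SH); split=> //.
by exists F; split=> // K SK; apply: isoH; apply: IH.
Qed.

Lemma cb_deriv_perfect (S : (T -> Prop) -> Prop) :
  (forall H, S H -> ~ isolated_in dom S H) -> cb_deriv dom S = S.
Proof.
by move=> perfect; apply: pred_ext => H; split=> [[] //|SH]; split=> //; apply: perfect.
Qed.

Lemma cb_rank_bomega :
  cb_deriv dom (cb_iter dom X bomega) = cb_iter dom X bomega ->
  (forall m, cb_iter dom X (nat_bord m) <> cb_iter dom X (nat_bord m.+1)) ->
  is_CB_rank_space dom X bomega.
Proof.
by move=> fix_omega strict; apply: (rank_bomega (step := cb_deriv dom)) => // Y x [].
Qed.
End CBDerivatives.

(** * The lamplighter group *)

Local Open Scope ring_scope.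

Section Lamplighter.
Variables p n : nat.
Local Notation V := 'rV['F_p]_n.
Local Notation A := (int -> V).
Local Notation L := (lamp p n).

Definition shift (e : int) (f : A) : A := fun k => f (k - e).

Definition supp_le (B : nat) (f : A) := forall k : int, (B < `|k|)%N -> f k = 0.

Definition fin_supp (f : A) := exists N, supp_le N f.

Lemma lamp_ext (x y : L) : (forall k, x.1 k = y.1 k) -> x.2 = y.2 -> x = y.
Proof.
by case: x => f a; case: y => g b /= h ->; congr pair; apply: functional_extensionality.
Qed.

Lemma lmulA (x y z : L) : lmul (lmul x y) z = lmul x (lmul y z).
Proof. by apply: lamp_ext => [k|] /=; rewrite ?addrA // opprD addrA. Qed.

Lemma lmul1 (x : L) : lmul x (lone p n) = x.
Proof. by apply: lamp_ext => [k|] /=; rewrite addr0. Qed.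

Lemma lmulV (x : L) : lmul (linv x) x = lone p n.
Proof. by apply: lamp_ext => [k|] /=; rewrite ?opprK ?addNr // addrC subrr. Qed.

Lemma shift_shift (a b : int) (f : A) : shift a (shift b f) = shift (a + b) f.
Proof. by apply: functional_extensionality => k; rewrite /shift opprD addrA. Qed.

Lemma shift0 (f : A) : shift 0 f = f.
Proof. by apply: functional_extensionality => k; rewrite /shift subr0. Qed.

Lemma fin_supp0 : fin_supp (fun _ => 0). Proof. by exists 0%N. Qed.

Lemma fin_supp_add (f g : A) : fin_supp f -> fin_supp g -> fin_supp (fun k => f k + g k).
Proof.
move=> [N hN] [M hM]; exists (maxn N M) => k; rewrite gtn_max => /andP [hkN hkM].
by rewrite hN ?hM ?addr0.
Qed.

Lemma fin_supp_opp (f : A) : fin_supp f -> fin_supp (fun k => - f k).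
Proof. by move=> [N hN]; exists N => k hk; rewrite hN ?oppr0. Qed.

Lemma fin_supp_shift t (f : A) : fin_supp f -> fin_supp (shift t f).
Proof. by move=> [N hN]; exists (N + `|t|)%N => k hk; rewrite /shift hN //; lia. Qed.

Definition ones : V := const_mx 1.

Definition delta (k0 : int) : A := fun k => if k == k0 then ones else 0.

Lemma supp_le_delta k0 : supp_le `|k0| (delta k0).
Proof. by move=> k hk; rewrite /delta; case: eqP => // ek; rewrite ek ltnn in hk. Qed.

Definition zclosed (M : A -> Prop) :=
  [/\ M (fun _ => 0), forall f g, M f -> M g -> M (fun k => f k + g k)
    & forall f, M f -> M (fun k => - f k)].

Definition shift_closed (d : int) (M : A -> Prop) :=
  forall f, M f -> M (shift d f) /\ M (shift (- d) f).

Lemma shift_closed_mulz d M f (q : int) :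
  shift_closed d M -> M f -> M (shift (q * d) f).
Proof.
move=> hs hf; have hnat (m : nat) : M (shift (m%:Z * d) f) /\ M (shift (- (m%:Z * d)) f).
  elim: m => [|m [IH1 IH2]]; first by rewrite mul0r oppr0 shift0.
  rewrite -addn1 PoszD mulrDl mul1r addrC opprD -!shift_shift.
  by split; [case: (hs _ IH1)|case: (hs _ IH2)].
by case: q => m; [case: (hnat m)|rewrite NegzE mulNr; case: (hnat m.+1)].
Qed.

Section Subgroup.
Variable H : L -> Prop.
Hypothesis hH : is_subgroup H.

Lemma subgroup_inL x : H x -> inL x.
Proof. by case: hH => h _; apply: h. Qed.

Lemma subgroup1 : H (lone p n).
Proof. by case: hH => _ []. Qed.

Lemma subgroupM x y : H x -> H y -> H (lmul x y).
Proof. by case: hH => _ [_ [mulH _]]; apply: mulH. Qed.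

Lemma subgroupV x : H x -> H (linv x).
Proof. by case: hH => _ [_ [_ invH]]; apply: invH. Qed.

Definition base (f : A) := H (f, 0).

Lemma base_zclosed : zclosed base.
Proof.
split; first exact: subgroup1.
- move=> f g hf hg; have := subgroupM hf hg.
  suff -> : lmul (f, 0) (g, 0) = ((fun k => f k + g k), 0 : int) by [].
  by apply: lamp_ext => [k|] /=; rewrite ?subr0 ?addr0.
- move=> f hf; have := subgroupV hf.
  suff -> : linv (f, 0) = ((fun k => - f k), 0 : int) by [].
  by apply: lamp_ext => [k|] /=; rewrite ?addr0 ?oppr0.
Qed.

Lemma base_fin_supp f : base f -> fin_supp f.
Proof. exact: subgroup_inL. Qed.

(* Conjugating by a lift [(g, d)] of the translation [d] shifts the base by [d]. *)
Lemma base_shift_closed g d : H (g, d) -> shift_closed d base.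
Proof.
move=> hg f hf; split.
- have := subgroupM (subgroupM hg hf) (subgroupV hg).
  suff -> : lmul (lmul (g, d) (f, 0)) (linv (g, d)) = (shift d f, 0) by [].
  apply: lamp_ext => [k|] /=; last by rewrite addr0 subrr.
  by rewrite /shift addr0 subrK addrAC subrr add0r.
- have := subgroupM (subgroupM (subgroupV hg) hf) hg.
  suff -> : lmul (lmul (linv (g, d)) (f, 0)) (g, d) = (shift (- d) f, 0) by [].
  apply: lamp_ext => [k|] /=; last by rewrite addr0 addNr.
  by rewrite /shift addr0 opprK [- _ + _]addrC -addrA addNr addr0.
Qed.
End Subgroup.

Definition gpow (a : L) (q : int) : L :=
  match q with
  | Posz m => iter m (lmul a) (lone p n)
  | Negz m => iter m.+1 (lmul (linv a)) (lone p n)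
  end.

Lemma gpow_snd a q : (gpow a q).2 = q * a.2.
Proof.
case: q => m /=.
- elim: m => [|m IH] /=; first by rewrite mul0r.
  by rewrite IH -[m.+1]addn1 PoszD mulrDl mul1r addrC.
- elim: m => [|m IH] /=; first by rewrite addr0 NegzE mulN1r.
  by rewrite IH !NegzE -[m.+2]addn1 PoszD opprD mulrDl mulN1r addrC.
Qed.

Lemma subgroup_gpow H a q : is_subgroup H -> H a -> H (gpow a q).
Proof.
move=> hH ha; case: q => m /=; elim: m => [|m IH] /=.
- exact: subgroup1.
- exact: subgroupM.
- exact: (subgroupM hH (subgroupV hH ha) (subgroup1 hH)).
- exact: (subgroupM hH (subgroupV hH ha) IH).
Qed.

Lemma subgroup_base_gpow G (d : int) g x :
  is_subgroup G -> G (g, d) -> (d %| x.2)%Z ->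
  G x <-> base G (lmul x (linv (gpow (g, d) (x.2 %/ d)%Z))).1.
Proof.
move=> hG hg hdx; set P := gpow (g, d) (x.2 %/ d)%Z.
have hP : G P by apply: subgroup_gpow.
have ey : lmul x (linv P) = ((lmul x (linv P)).1, 0).
  by apply: lamp_ext => //=; rewrite /P gpow_snd /= divzK // subrr.
rewrite /base -ey; split=> [hx|hy].
  exact: (subgroupM hG hx (subgroupV hG hP)).
by have := subgroupM hG hy hP; rewrite lmulA lmulV lmul1.
Qed.
End Lamplighter.

Arguments ones {p n}.
Arguments delta {p n} k0 _.

Section BaseSubgroups.
Variables p n : nat.
Hypothesis n_gt0 : (0 < n)%N.
Local Notation V := 'rV['F_p]_n.
Local Notation L := (lamp p n).

Lemma scale_ones_eq0 (c : 'F_p) : c *: (ones : V) = 0 -> c = 0.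
Proof. by move/(congr1 (fun v : V => v ord0 (Ordinal n_gt0))); rewrite !mxE mulr1. Qed.

Lemma ones_neq0 : (ones : V) != 0.
Proof.
apply/eqP => h; have /scale_ones_eq0/eqP : (1 : 'F_p) *: (ones : V) = 0 by rewrite scale1r.
by rewrite oner_eq0.
Qed.

Lemma list_supp_le (F : list L) : (forall x, List.In x F -> inL x) ->
  exists B, forall x, List.In x F -> supp_le B x.1.
Proof.
elim: F => [|a F IH] hF; first by exists 0%N.
have [B hB] := IH (fun x hx => hF x (or_intror hx)).
have [N hN] := hF a (or_introl erefl).
exists (maxn B N) => x [<-|hx] k; rewrite gtn_max => /andP [hkB hkN]; first exact: hN.
exact: hB.
Qed.

Definition base_subgroup (H : L -> Prop) := is_subgroup H /\ forall x, H x -> x.2 = 0.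

Section BaseNeighbours.
Variables (H : L -> Prop) (B : nat).
Hypothesis baseH : base_subgroup H.

Lemma base_subgroup_truncate :
  (exists f, H (f, 0) /\ ~ supp_le B f) ->
  exists K, [/\ base_subgroup K, K <> H & forall x, supp_le B x.1 -> K x <-> H x].
Proof.
case: baseH => hH H0 [f [hf hfB]].
exists (fun x => H x /\ supp_le B x.1); split.
- split; last by move=> x [/H0].
  split; first by move=> x [/(subgroup_inL hH)].
  split; first by split; [apply: subgroup1|].
  split=> [x y [hx bx] [hy by_]|x [hx bx]]; split.
  + exact: (subgroupM hH).
  + by move=> k hk /=; rewrite (H0 _ hx) subr0 bx // by_ // addr0.
  + exact: (subgroupV hH).
  + by move=> k hk /=; rewrite (H0 _ hx) addr0 bx // oppr0.
- by move=> e; move: hf; rewrite -e => -[].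
- by move=> x hx; split=> [[]|].
Qed.

Definition adjoin_delta (H : L -> Prop) (k0 : int) : L -> Prop := fun x =>
  x.2 = 0 /\ exists v (c : 'F_p), H (v, 0) /\ x.1 = (fun k => v k + c *: delta k0 k).

Lemma adjoin_delta_base_subgroup k0 : base_subgroup (adjoin_delta H k0).
Proof.
case: baseH => hH _; case: (base_zclosed hH) => _ addH oppH.
split=> [|x []//]; split.
  move=> x [_ [v [c [hv ex]]]]; rewrite /inL ex; have [N hN] := subgroup_inL hH hv.
  exists (maxn N `|k0|) => k; rewrite gtn_max => /andP [hkN hk0].
  by have /= -> := hN k hkN; rewrite supp_le_delta // scaler0 addr0.
split.
  split=> //; exists (fun _ => 0), 0; split; first exact: (subgroup1 hH).
  by apply: functional_extensionality => k; rewrite scale0r addr0.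
split=> [x y [x2 [v [c [hv ex]]]] [y2 [v' [c' [hv' ey]]]]|x [x2 [v [c [hv ex]]]]].
- split; first by rewrite /= x2 y2 addr0.
  exists (fun k => v k + v' k), (c + c'); split; first exact: addH.
  apply: functional_extensionality => k /=.
  by rewrite x2 subr0 ex ey scalerDl addrACA.
- split; first by rewrite /= x2 oppr0.
  exists (fun k => - v k), (- c); split; first exact: oppH.
  apply: functional_extensionality => k /=.
  by rewrite x2 addr0 ex opprD scaleNr.
Qed.

Lemma base_subgroup_extend :
  (forall f, H (f, 0) -> supp_le B f) ->
  exists K, [/\ base_subgroup K, K <> H & forall x, supp_le B x.1 -> K x <-> H x].
Proof.
case: baseH => hH H0 hB; set k0 := (B.+1)%:Z.
exists (adjoin_delta H k0); split; first exact: adjoin_delta_base_subgroup.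
- move=> e; have : H (delta k0, 0).
    rewrite -e; split=> //; exists (fun _ => 0), 1; split; first exact: (subgroup1 hH).
    by apply: functional_extensionality => k; rewrite scale1r add0r.
  move/hB/(_ k0 (ltnSn _)); rewrite /delta eqxx => /eqP.
  by rewrite (negbTE ones_neq0).
- move=> [g1 g2] hg; rewrite /adjoin_delta /=; split.
  + move=> [-> [v [c [hv e]]]].
    have c0 : c = 0.
      apply: scale_ones_eq0; have := hg k0 (ltnSn _).
      by rewrite /= e (hB v hv k0 (ltnSn _)) add0r /delta eqxx.
    suff -> : g1 = v by [].
    by rewrite e c0; apply: functional_extensionality => k; rewrite scale0r addr0.
  + move=> h; have g20 : g2 = 0 by apply: (H0 _ h).
    split=> //; exists g1, 0; split; first by rewrite -g20.
    by apply: functional_extensionality => k; rewrite scale0r addr0.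
Qed.
End BaseNeighbours.

Lemma base_subgroup_not_isolated H :
  base_subgroup H -> ~ isolated_in (@inL p n) base_subgroup H.
Proof.
move=> baseH [_ [F [hF isoH]]]; have [B hB] := list_supp_le hF.
have [K [baseK neKH agree]] : exists K, [/\ base_subgroup K, K <> H &
    forall x, supp_le B x.1 -> K x <-> H x].
  case: (classic (exists f, H (f, 0) /\ ~ supp_le B f)).
  - exact: base_subgroup_truncate.
  - move=> hno; apply: base_subgroup_extend => // f hf.
    by apply: NNPP => hfB; apply: hno; exists f.
by apply: neKH; apply: isoH => // x /hB; apply: agree.
Qed.
End BaseSubgroups.

(** * Subgroups of large rank *)

Section EuclideanDivision.
Variable d : nat.
Hypothesis d_gt0 : (0 < d)%N.

Lemma edivz_MDl (j a : int) : 0 <= a < d%:Z ->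
  ((j * d%:Z + a) %/ d%:Z)%Z = j /\ ((j * d%:Z + a) %% d%:Z)%Z = a.
Proof.
have dn0 : d%:Z != 0 by rewrite eqz_nat -lt0n.
move=> ha; rewrite divzMDl // divz_small ?addr0 //; split=> //.
by rewrite modzMDl modz_small.
Qed.

Lemma modz_range (k : int) : 0 <= (k %% d%:Z)%Z < d%:Z.
Proof. by rewrite modz_ge0 ?ltz_pmod // eqz_nat -lt0n. Qed.

Lemma edivz_DMl (k t : int) :
  ((k + t * d%:Z) %/ d%:Z)%Z = (k %/ d%:Z)%Z + t /\
  ((k + t * d%:Z) %% d%:Z)%Z = (k %% d%:Z)%Z.
Proof.
have := edivz_MDl ((k %/ d%:Z)%Z + t) (modz_range k).
by rewrite mulrDl addrAC -divz_eq.
Qed.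
End EuclideanDivision.

Lemma fin_supp_progression_eq0 p n (c : int -> 'rV['F_p]_n) (j s : int) :
  fin_supp c -> s != 0 -> (forall t : nat, c (j + t%:Z * s) = c j) -> c j = 0.
Proof.
move=> [N hN] s0 hc; rewrite -(hc (N + `|j|).+1%N) hN //.
have : (0 < `|s|)%N by rewrite absz_gt0.
by nia.
Qed.

Section LowerBound.
Variables p n : nat.
Hypothesis n_gt0 : (0 < n)%N.
Local Notation V := 'rV['F_p]_n.
Local Notation A := (int -> V).
Local Notation L := (lamp p n).
Variable d : nat.
Hypothesis d_gt0 : (0 < d)%N.
Local Notation dZ := d%:Z.

Definition residue_family (a : nat) (M : A -> Prop) :=
  [/\ zclosed M, shift_closed dZ M, forall f, M f -> fin_supp f
    & forall f k, M f -> f k <> 0 -> ((k %% dZ)%Z < a%:Z)].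

Definition sdprod_subgroup (M : A -> Prop) : L -> Prop :=
  fun x => (dZ %| x.2)%Z /\ M x.1.

Lemma sdprod_subgroupP M : zclosed M -> shift_closed dZ M ->
  (forall f, M f -> fin_supp f) -> is_subgroup (sdprod_subgroup M).
Proof.
move=> [M0 addM oppM] shM finM.
split; first by move=> x [_ /finM].
split; first by split; [apply: dvdz0|].
split=> [x y [/dvdzP [q1 e1] hx] [/dvdzP [q2 e2] hy]|x [/dvdzP [q e] hx]]; split.
- by apply/dvdzP; exists (q1 + q2); rewrite /= e1 e2 mulrDl.
- by apply: addM => //; rewrite /= e1; apply: shift_closed_mulz.
- by apply/dvdzP; exists (- q); rewrite /= e mulNr.
- have := oppM _ (shift_closed_mulz (- q) shM hx).
  suff -> : (fun k => - shift (- q * dZ) x.1 k) = (fun k => - x.1 (k + x.2)) by [].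
  by apply: functional_extensionality => k; rewrite /shift e mulNr opprK.
Qed.

Section Perturbation.
Variables a N : nat.

Definition perturb (c : A) : A := fun k =>
  if (k %% dZ)%Z == a%:Z then c ((k %/ dZ)%Z - N%:Z) - c (k %/ dZ)%Z else 0.

Lemma perturb0 k : perturb (fun _ => 0) k = 0.
Proof. by rewrite /perturb; case: ifP; rewrite ?subrr. Qed.

Lemma perturb_add c c' k : perturb (fun j => c j + c' j) k = perturb c k + perturb c' k.
Proof. by rewrite /perturb; case: ifP; rewrite ?addr0 // opprD addrACA. Qed.

Lemma perturb_opp c k : perturb (fun j => - c j) k = - perturb c k.
Proof. by rewrite /perturb; case: ifP; rewrite ?oppr0 // opprD. Qed.

Lemma perturb_shift c (t : int) k : perturb c (k + t * dZ) = perturb (shift (- t) c) k.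
Proof.
rewrite /perturb /shift; have [-> ->] := edivz_DMl d_gt0 k t.
by case: ifP => // _; rewrite !opprK addrAC.
Qed.

Lemma fin_supp_perturb c : fin_supp c -> fin_supp (perturb c).
Proof.
move=> [N0 hN0]; exists ((N0 + N).+1 * d)%N => k hk; rewrite /perturb.
case: ifP => // _; have e := divz_eq k dZ; have r := modz_range d_gt0 k.
set q := (k %/ dZ)%Z in e *; have hq : (N0 + N < `|q|)%N by nia.
by rewrite !hN0 ?subrr //; lia.
Qed.

Definition perturb_family (M : A -> Prop) : A -> Prop :=
  fun f => exists m c, [/\ M m, fin_supp c & f = (fun k => m k + perturb c k)].

Lemma residue_family_perturb M :
  (a < d)%N -> residue_family a M -> residue_family a.+1 (perturb_family M).
Proof.
move=> ad [[M0 addM oppM] shM finM resM]; split; first split.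
- exists (fun _ => 0), (fun _ => 0); split=> //; first exact: fin_supp0.
  by apply: functional_extensionality => k; rewrite perturb0 addr0.
- move=> _ _ [m [c [hm hc ->]]] [m' [c' [hm' hc' ->]]].
  exists (fun k => m k + m' k), (fun k => c k + c' k).
  split; [exact: addM|exact: fin_supp_add|].
  by apply: functional_extensionality => k; rewrite perturb_add addrACA.
- move=> _ [m [c [hm hc ->]]]; exists (fun k => - m k), (fun k => - c k).
  split; [exact: oppM|exact: fin_supp_opp|].
  by apply: functional_extensionality => k; rewrite perturb_opp opprD.
- move=> _ [m [c [hm hc ->]]]; have [shm shm'] := shM _ hm; split.
  + exists (shift dZ m), (shift 1 c); split; [by []|exact: fin_supp_shift|].
    apply: functional_extensionality => k; rewrite /shift.
    have -> : k - dZ = k + (-1) * dZ by rewrite mulN1r.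
    by rewrite perturb_shift opprK.
  + exists (shift (- dZ) m), (shift (-1) c); split; [by []|exact: fin_supp_shift|].
    apply: functional_extensionality => k; rewrite /shift.
    have -> : k - - dZ = k + 1 * dZ by rewrite mul1r opprK.
    by rewrite perturb_shift.
- by move=> _ [m [c [hm hc ->]]]; apply: fin_supp_add; [apply: finM|apply: fin_supp_perturb].
- move=> _ k [m [c [hm hc ->]]]; case: (eqVneq (m k) 0) => [->|/eqP mk0].
    rewrite add0r /perturb; case: ifP => [/eqP -> _|_ //].
    by rewrite ltz_nat ltnS.
  by move=> _; apply: lt_trans (resM _ _ hm mk0) _; rewrite ltz_nat.
Qed.

(* Away from [-B, B], the perturbation forces [c (j - N) = c j]; with
   [N > 2 B] every [j] is linked in this way to points outside the support. *)
Lemma perturb_eq0 (B : nat) c : (a < d)%N -> fin_supp c ->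
  supp_le B (perturb c) -> (2 * B < N)%N -> forall j, c j = 0.
Proof.
move=> ad hc hB BN.
have link (j : int) : (B < `|(j * dZ + a%:Z)%R|)%N -> c (j - N%:Z) = c j.
  move=> hj; have := hB _ hj; rewrite /perturb.
  have [-> ->] := edivz_MDl d_gt0 j (a := a%:Z) ltac:(apply/andP; split; lia).
  by rewrite eqxx => /subr0_eq.
have d1 : 1 <= dZ by rewrite lez_nat.
move=> j; case: (ltrP B%:Z ((j + N%:Z) * dZ + a%:Z)) => hj.
- apply: (fin_supp_progression_eq0 (s := N%:Z)) => //; first by apply/eqP; lia.
  elim=> [|t IH]; first by rewrite mul0r addr0.
  rewrite -IH -(link (j + t.+1%:Z * N%:Z)); first by congr c; lia.
  have : 0 <= t%:Z * (N%:Z * dZ) by nia.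
  by nia.
- apply: (fin_supp_progression_eq0 (s := - N%:Z)) => //; first by apply/eqP; lia.
  elim=> [|t IH]; first by rewrite mul0r addr0.
  rewrite -IH -(link (j + t%:Z * - N%:Z)); first by congr c; lia.
  have : 0 <= t%:Z * (N%:Z * dZ) by nia.
  have : N%:Z <= N%:Z * dZ by nia.
  by nia.
Qed.
End Perturbation.

Section Approximation.
Variables (a N : nat) (M : A -> Prop).
Hypotheses (ad : (a < d)%N) (famM : residue_family a M).

Lemma perturb_family_agree (B : nat) : (2 * B < N)%N ->
  forall x, supp_le B x.1 ->
  sdprod_subgroup (perturb_family a N M) x <-> sdprod_subgroup M x.
Proof.
case: famM => _ _ _ resM BN [g1 g2] hg /=; split.
- move=> [dg [m [c [hm hc /= e]]]]; split=> //.
  have perturbB : supp_le B (perturb a N c).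
    move=> k hk; have := hg k hk; rewrite /= e.
    case: (eqVneq (m k) 0) => [->|/eqP mk0]; first by rewrite add0r.
    have := resM _ _ hm mk0; rewrite /perturb; case: ifP => // /eqP ->.
    by rewrite ltxx.
  have c0 := perturb_eq0 ad hc perturbB BN.
  suff -> : g1 = m by [].
  rewrite e; apply: functional_extensionality => k.
  by rewrite /perturb !c0 subrr if_same addr0.
- move=> [dg hm]; split=> //; exists g1, (fun _ => 0); split=> //; first exact: fin_supp0.
  by apply: functional_extensionality => k; rewrite perturb0 addr0.
Qed.

Lemma perturb_family_neq : (0 < N)%N ->
  sdprod_subgroup (perturb_family a N M) <> sdprod_subgroup M.
Proof.
case: famM => [[M0 _ _] _ _ resM] N0 e.
have : sdprod_subgroup (perturb_family a N M) (perturb a N (delta 0), 0).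
  split; first exact: dvdz0.
  exists (fun _ => 0), (delta 0); split=> //.
    by exists 0%N; apply: (supp_le_delta p n (k0 := 0)).
  by apply: functional_extensionality => k; rewrite add0r.
have [qa ra] : (a%:Z %/ dZ)%Z = 0 /\ (a%:Z %% dZ)%Z = a%:Z.
  have := edivz_MDl d_gt0 0 (a := a%:Z) ltac:(apply/andP; split; lia).
  by rewrite mul0r add0r.
have perturb_a : perturb a N (delta 0) a%:Z <> 0.
  rewrite /perturb ra qa eqxx /delta eqxx; case: eqP => [|_]; first lia.
  by rewrite sub0r; apply/eqP; rewrite oppr_eq0 (ones_neq0 p n_gt0).
by rewrite e => -[_ hM]; have := resM _ _ hM perturb_a; rewrite ra ltxx.
Qed.
End Approximation.

(* Each perturbation uses up one more residue class mod [d], hence [a + j <= d]. *)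
Lemma sdprod_subgroup_cb_iter j : forall a M, (a + j <= d)%N -> residue_family a M ->
  cb_iter (@inL p n) (@is_subgroup p n) (nat_bord j) (sdprod_subgroup M).
Proof.
elim: j => [|j IH] a M haj famM /=.
  by case: famM => zM shM finM _; apply: sdprod_subgroupP.
split; first by apply: IH famM; lia.
move=> [_ [F [hF isoM]]]; have [B hB] := list_supp_le hF.
have ad : (a < d)%N by lia.
apply: (perturb_family_neq ad famM (ltn0Sn (2 * B))); apply: isoM.
- by apply: IH (residue_family_perturb _ ad famM); lia.
- by move=> x /hB; apply: perturb_family_agree.
Qed.
End LowerBound.

(** * Subgroups with a nontrivial translation have finite rank *)

Lemma subset_chain_stationary (T : finType) (S : nat -> {set T}) :
  (forall w, S w \subset S w.+1) -> exists w1, forall w, S w \subset S w1.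
Proof.
move=> hS; have mono w w' : (w <= w')%N -> S w \subset S w'.
  move/subnK <-; elim: (w' - w)%N => [|k IH]; first by rewrite add0n.
  by apply: subset_trans IH _; rewrite addSn.
have ex0 : exists k, pbool (exists w, #|S w| = k).
  by exists #|S 0%N|; apply/pboolP; exists 0%N.
have bounded k : pbool (exists w, #|S w| = k) -> (k <= #|T|)%N.
  by move/pboolP => [w <-]; apply: max_card.
case: (ex_maxnP ex0 bounded) => k /pboolP [w1 e1] hmax.
exists w1 => w; apply: subset_trans (mono w (maxn w w1) (leq_maxl _ _)) _.
suff -> : S w1 = S (maxn w w1) by [].
apply/eqP; rewrite eqEcard mono ?leq_maxr //= e1.
by apply: hmax; apply/pboolP; exists (maxn w w1).
Qed.

Lemma mem_In (T : eqType) (x : T) (s : seq T) : x \in s -> List.In x s.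
Proof. by elim: s => [|a s IH] //=; rewrite in_cons => /orP [/eqP ->|/IH]; [left|right]. Qed.

Section Windows.
Variables p n : nat.
Local Notation V := 'rV['F_p]_n.
Local Notation A := (int -> V).
Variable d : nat.
Hypothesis d_gt0 : (0 < d)%N.
Local Notation dZ := d%:Z.

Definition supp_in (lo hi : int) (f : A) := forall k, (k < lo) || (hi <= k) -> f k = 0.

Definition top_block (w : nat) (f : A) : {ffun 'I_d -> V} :=
  [ffun i : 'I_d => f ((w%:Z - 1) * dZ + (i : nat)%:Z)].

Definition top_blocks (M : A -> Prop) (w : nat) : {set {ffun 'I_d -> V}} :=
  [set v | pbool (exists f, [/\ M f, supp_in 0 (w * d)%N%:Z f & top_block w f = v])].

Lemma top_blocksP M w v : reflect
  (exists f, [/\ M f, supp_in 0 (w * d)%N%:Z f & top_block w f = v])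
  (v \in top_blocks M w).
Proof. by rewrite inE; apply: pboolP. Qed.

Lemma top_blocksS M w : shift_closed dZ M -> top_blocks M w \subset top_blocks M w.+1.
Proof.
move=> shM; apply/subsetP => _ /top_blocksP [f [hf fw <-]].
apply/top_blocksP; exists (shift dZ f); split; first by case: (shM _ hf).
- by move=> k hk; rewrite /shift; apply: fw; move: hk; lia.
- by apply/ffunP => i; rewrite !ffunE /shift; congr f; lia.
Qed.

Lemma top_blocks_sub (M M' : A -> Prop) w :
  (forall f, M f -> M' f) -> top_blocks M w \subset top_blocks M' w.
Proof.
move=> MM'; apply/subsetP => _ /top_blocksP [f [hf fw <-]].
by apply/top_blocksP; exists f; split=> //; apply: MM'.
Qed.

Lemma peel_top_block (w w1 : nat) (f y : A) : (w1 <= w.+1)%N ->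
  supp_in 0 (w.+1 * d)%N%:Z f -> supp_in 0 (w1 * d)%N%:Z y ->
  top_block w.+1 f = top_block w1 y ->
  supp_in 0 (w * d)%N%:Z (fun k => f k - shift ((w.+1 - w1)%N%:Z * dZ) y k).
Proof.
move=> ww1 fw yw e.
have y'w : supp_in 0 (w.+1 * d)%N%:Z (shift ((w.+1 - w1)%N%:Z * dZ) y).
  move=> k hk; rewrite /shift; apply: yw; move: hk.
  have -> : (w.+1 - w1)%N%:Z * dZ = (w.+1%:Z - w1%:Z) * dZ by nia.
  by nia.
move=> k hk; case: (boolP ((k < 0) || ((w.+1 * d)%N%:Z <= k))) => kout.
  by rewrite fw // y'w // subrr.
have hi : (`|k - (w * d)%N%:Z| < d)%N by move: hk kout; nia.
have := congr1 (fun F : {ffun 'I_d -> V} => F (Ordinal hi)) e; rewrite !ffunE /= => ek.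
have {1}-> : k = (w.+1%:Z - 1) * dZ + (`|k - (w * d)%N%:Z|%N)%:Z by move: hk kout; nia.
rewrite ek; apply/eqP; rewrite subr_eq0; apply/eqP; rewrite /shift; congr y.
by move: hk kout; nia.
Qed.

Lemma fin_supp_shift_window (f : A) : fin_supp f ->
  exists t w : nat, supp_in 0 (w * d)%N%:Z (shift (t%:Z * dZ) f).
Proof.
move=> [N hN]; exists N.+1, (N.+1 + N.+1)%N => k hk; rewrite /shift; apply: hN.
have : N.+1%:Z <= N.+1%:Z * dZ by nia.
by move: hk; nia.
Qed.

Section Decomposition.
Variables (M M' : A -> Prop) (w1 : nat).
Hypotheses (zM : zclosed M) (shM : shift_closed dZ M) (zM' : zclosed M').
Hypotheses (MM' : forall f, M f -> M' f)
  (stable : forall w, top_blocks M' w \subset top_blocks M w1).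

Definition window_generated (y : A) := forall P : A -> Prop,
  zclosed P -> shift_closed dZ P ->
  (forall m, M m -> supp_in 0 (w1 * d)%N%:Z m -> P m) -> P y.

(* Peel off top blocks one at a time, each matched by a translate of an element
   of [M] living in the window [[0, w1 d)]. *)
Lemma window_decomposition w f : M' f -> supp_in 0 (w * d)%N%:Z f ->
  exists y, [/\ M y, window_generated y & supp_in 0 (w1 * d)%N%:Z (fun k => f k - y k)].
Proof.
case: zM => M0 addM oppM; case: zM' => _ addM' oppM'.
elim: w f => [|w IH] f hf fw.
  exists (fun _ => 0); split=> //; first by move=> P [P0 _ _].
  by move=> k hk; rewrite subr0; apply: fw; move: hk; lia.
case: (leqP w.+1 w1) => ww1.
  exists (fun _ => 0); split=> //; first by move=> P [P0 _ _].
  by move=> k hk; rewrite subr0; apply: fw; move: hk; nia.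
have /top_blocksP [y [hy yw ey]] : top_block w.+1 f \in top_blocks M w1.
  by apply: (subsetP (stable w.+1)); apply/top_blocksP; exists f.
pose y' := shift ((w.+1 - w1)%N%:Z * dZ) y; have hy' : M y' by apply: shift_closed_mulz.
have [z [hz zgen zw]] := IH (fun k => f k - y' k) (addM' _ _ hf (oppM' _ (MM' hy')))
  (peel_top_block (ltnW ww1) fw yw (esym ey)).
exists (fun k => z k + y' k); split; first exact: addM.
- move=> P zP shP base; case: (zP) => _ addP _; apply: addP; first exact: zgen.
  exact: (shift_closed_mulz _ shP (base _ hy yw)).
- by move=> k hk; rewrite opprD addrA addrAC; apply: zw.
Qed.
End Decomposition.

Lemma window_generates (M P : A -> Prop) w1 :
  zclosed M -> shift_closed dZ M -> (forall f, M f -> fin_supp f) ->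
  (forall w, top_blocks M w \subset top_blocks M w1) ->
  zclosed P -> shift_closed dZ P -> (forall m, M m -> supp_in 0 (w1 * d)%N%:Z m -> P m) ->
  forall f, M f -> P f.
Proof.
move=> zM shM finM stable zP shP base f hf.
have [t [w fw]] := fin_supp_shift_window (finM _ hf).
have hft : M (shift (t%:Z * dZ) f) by apply: shift_closed_mulz.
have [y [hy ygen yw]] := window_decomposition zM shM zM (fun f hf => hf) stable hft fw.
have : P (shift (t%:Z * dZ) f).
  have -> : shift (t%:Z * dZ) f = (fun k => (shift (t%:Z * dZ) f k - y k) + y k).
    by apply: functional_extensionality => k; rewrite subrK.
  case: (zP) => _ addP _; apply: addP; last exact: ygen.
  by apply: base yw; case: zM => _ addM oppM; apply: addM hft (oppM _ hy).
by move/(shift_closed_mulz (- t%:Z) shP); rewrite shift_shift mulNr addNr shift0.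
Qed.

Lemma window_separates (M M' : A -> Prop) w1 :
  zclosed M -> shift_closed dZ M -> zclosed M' -> shift_closed dZ M' ->
  (forall f, M' f -> fin_supp f) -> (forall f, M f -> M' f) ->
  (forall w, top_blocks M' w \subset top_blocks M w1) ->
  forall f, M' f -> ~ M f ->
  exists f', [/\ M' f', ~ M f' & supp_in 0 (w1 * d)%N%:Z f'].
Proof.
move=> zM shM zM' shM' finM' MM' stable f hf hnf.
have [t [w fw]] := fin_supp_shift_window (finM' _ hf).
have hft : M' (shift (t%:Z * dZ) f) by apply: shift_closed_mulz.
have [y [hy _ yw]] := window_decomposition zM shM zM' MM' stable hft fw.
exists (fun k => shift (t%:Z * dZ) f k - y k); split=> //.
- by case: zM' => _ addM' oppM'; apply: addM' hft (oppM' _ (MM' _ hy)).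
- move=> hM; apply: hnf; case: zM => _ addM _.
  have /(shift_closed_mulz (- t%:Z) shM) : M (shift (t%:Z * dZ) f).
    have -> : shift (t%:Z * dZ) f = (fun k => (shift (t%:Z * dZ) f k - y k) + y k).
      by apply: functional_extensionality => k; rewrite subrK.
    exact: addM.
  by rewrite shift_shift mulNr addNr shift0.
Qed.
End Windows.

Section UpperBound.
Variables p n : nat.
Local Notation V := 'rV['F_p]_n.
Local Notation A := (int -> V).
Local Notation L := (lamp p n).

Lemma min_translation (H : L -> Prop) : is_subgroup H -> (exists x, H x /\ x.2 <> 0) ->
  exists d g, [/\ (0 < d)%N, H (g, d%:Z) & forall x, H x -> (d%:Z %| x.2)%Z].
Proof.
move=> hH [x0 [hx0 x0n0]].
have [x1 [hx1 x1pos]] : exists x1, H x1 /\ 0 < x1.2.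
  case: (ltrgt0P x0.2) => h; first by exists x0.
    by exists (linv x0); split; [apply: subgroupV|rewrite /= oppr_gt0].
  by [].
pose P m := pbool ((0 < m)%N /\ exists f, H (f, m%:Z)).
have exP : exists m, P m.
  exists `|x1.2|%N; apply/pboolP; split; first lia.
  exists x1.1; have -> : (`|x1.2|%N)%:Z = x1.2 by lia.
  by case: x1 hx1 x1pos.
case: (ex_minnP exP) => d /pboolP [d_gt0 [g hg]] dmin; exists d, g; split=> // x hx.
apply/dvdz_mod0P; set r := (x.2 %% d%:Z)%Z; have /andP [r0 rd] := modz_range d_gt0 x.2.
set y := lmul x (linv (gpow (g, d%:Z) (x.2 %/ d%:Z)%Z)).
have hy : H y by apply: (subgroupM hH hx); apply: (subgroupV hH); apply: subgroup_gpow.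
have y2 : y.2 = r.
  by rewrite /y /= gpow_snd /= {1}(divz_eq x.2 d%:Z) addrAC subrr add0r.
apply: NNPP => rn0; have : (d <= `|r|)%N.
  apply: dmin; apply/pboolP; split; first lia.
  exists y.1; have -> : (`|r|%N)%:Z = r by lia.
  by rewrite -y2; case: (y) hy.
lia.
Qed.

Definition translation_data (H : L -> Prop) (d : nat) (g : A) (w1 : nat) :=
  [/\ (0 < d)%N, H (g, d%:Z), (forall x, H x -> (d%:Z %| x.2)%Z)
    & forall w, top_blocks d (base H) w \subset top_blocks d (base H) w1].

Lemma translation_data_exists (H : L -> Prop) : is_subgroup H -> (exists x, H x /\ x.2 <> 0) ->
  exists d g w1, translation_data H d g w1.
Proof.
move=> hH /(min_translation hH) [d [g [d_gt0 hg ddvd]]].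
have [w1 stable] := subset_chain_stationary
  (fun w => top_blocksS d_gt0 w (base_shift_closed hH hg)).
by exists d, g, w1.
Qed.

(* The first summand dominates the second, so the measure is lexicographic in
   [d] and in the number of blocks that are not top blocks of the base. *)
Definition measure (H : L -> Prop) (d w1 : nat) :=
  (d * (#|{ffun 'I_d -> V}| + 1) + (#|{ffun 'I_d -> V}| - #|top_blocks d (base H) w1|))%N.

Lemma measure_translation_lt (H K : L -> Prop) d dK w1 wK : (dK < d)%N ->
  (measure K dK wK < measure H d w1)%N.
Proof.
move=> dKd; rewrite /measure !card_ffun !card_ord.
have : (#|V| ^ dK <= #|V| ^ d)%N.
  by apply: leq_pexp2l; [apply/card_gt0P; exists 0|apply: ltnW].
move: (#|V| ^ dK)%N (#|V| ^ d)%N => BK B BKB.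
by nia.
Qed.

Definition window_list (w : nat) : list L :=
  List.map (fun t : w.-tuple V => (fun k => if k is Posz m then nth 0 t m else 0, 0))
    (enum {: w.-tuple V}).

Lemma window_list_complete (w : nat) (f : A) :
  supp_in 0 w%:Z f -> List.In (f, 0) (window_list w).
Proof.
move=> fw; have size_f : size (mkseq (fun m => f m%:Z) w) == w by rewrite size_mkseq.
set t := Tuple size_f; apply/List.in_map_iff; exists t; split; last by apply/mem_In/mem_enum.
congr pair; apply: functional_extensionality; case=> m /=.
- case: (ltnP m w) => hm; first by rewrite nth_mkseq.
  by rewrite nth_default ?size_mkseq // fw //; lia.
- by rewrite fw //; lia.
Qed.

Lemma window_list_inL w x : List.In x (window_list w) -> inL x.
Proof.
move/List.in_map_iff => [t [<- _]]; exists w; case=> // m hm /=.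
by rewrite nth_default // size_tuple; lia.
Qed.

Definition data_list (d : nat) (g : A) (w1 : nat) : list L :=
  (g, d%:Z) :: window_list (w1 * d)%N.

Section Neighbour.
Variables (H K : L -> Prop) (d : nat) (g : A) (w1 : nat).
Hypotheses (hH : is_subgroup H) (dataH : translation_data H d g w1) (hK : is_subgroup K).
Hypothesis agree : forall x, List.In x (data_list d g w1) -> K x <-> H x.

Lemma neighbour_lift : K (g, d%:Z).
Proof. by case: dataH => _ hg _ _; apply/agree => //; left. Qed.

Lemma neighbour_base_sub f : base H f -> base K f.
Proof.
case: dataH => d_gt0 hg _ stable.
apply: (window_generates d_gt0 (base_zclosed hH) (base_shift_closed hH hg)
  (base_fin_supp hH) stable (base_zclosed hK) (base_shift_closed hK neighbour_lift)).
by move=> m hm mw; apply/agree => //; right; apply: window_list_complete.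
Qed.

Lemma neighbour_data_exists : exists dK gK wK, translation_data K dK gK wK.
Proof.
apply: translation_data_exists => //; exists (g, d%:Z); split; first exact: neighbour_lift.
by case: dataH => d_gt0 _ _ _ /=; apply/eqP; rewrite eqz_nat; lia.
Qed.

Lemma neighbour_measure_lt dK gK wK : K <> H -> translation_data K dK gK wK ->
  (measure K dK wK < measure H d w1)%N.
Proof.
move=> KH dataK; case: (dataK) (dataH) => dK_gt0 hgK dKdvd stableK [d_gt0 hg ddvd stable].
have : (dK <= d)%N by have := dKdvd _ neighbour_lift; rewrite /= dvdzE => /dvdn_leq; apply.
rewrite leq_eqVlt => /orP [/eqP edK|]; last exact: measure_translation_lt.
subst dK; case: (classic (exists f, base K f /\ ~ base H f)) => [[f [fK fH]]|].
- rewrite /measure ltn_add2l ltn_sub2lE ?max_card //.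
  have sub : top_blocks d (base H) w1 \subset top_blocks d (base K) wK.
    by apply: subset_trans (stableK w1); apply: top_blocks_sub neighbour_base_sub.
  rewrite ltnNge; apply/negP => le.
  have /eqP eq : top_blocks d (base H) w1 == top_blocks d (base K) wK.
    by rewrite eqEcard sub le.
  have stableKH w : top_blocks d (base K) w \subset top_blocks d (base H) w1.
    by rewrite eq.
  have [f' [f'K f'H f'w]] := window_separates d_gt0 (base_zclosed hH)
    (base_shift_closed hH hg) (base_zclosed hK) (base_shift_closed hK hgK)
    (base_fin_supp hK) neighbour_base_sub stableKH fK fH.
  by apply: f'H; apply/agree => //; right; apply: window_list_complete.
- move=> baseKH; exfalso; apply: KH; apply: pred_ext => x.
  case: (boolP (d%:Z %| x.2)%Z) => dx; last first.
    by split=> /[dup] h; [move/dKdvd|move/ddvd]; rewrite (negbTE dx).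
  rewrite (subgroup_base_gpow hK neighbour_lift dx) (subgroup_base_gpow hH hg dx).
  split=> [h|]; last exact: neighbour_base_sub.
  by apply: NNPP => h'; apply: baseKH; eexists; split; [exact: h|].
Qed.

Lemma neighbour_measure_lt_exists : K <> H ->
  exists dK gK wK, translation_data K dK gK wK /\ (measure K dK wK < measure H d w1)%N.
Proof.
move=> KH; have [dK [gK [wK dataK]]] := neighbour_data_exists.
by exists dK, gK, wK; split=> //; apply: (neighbour_measure_lt KH dataK).
Qed.
End Neighbour.

Lemma data_list_inL H d g w1 : is_subgroup H -> translation_data H d g w1 ->
  forall x, List.In x (data_list d g w1) -> inL x.
Proof. by move=> hH [_ hg _ _] x [<-|/window_list_inL //]; apply: (subgroup_inL hH hg). Qed.

(* Every neighbour of [H] in the [m]-th derived set has smaller measure. *)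
Lemma translation_data_not_cb_iter m : forall H d g w1,
  is_subgroup H -> translation_data H d g w1 -> (measure H d w1 <= m)%N ->
  ~ cb_iter (@inL p n) (@is_subgroup p n) (nat_bord m.+1) H.
Proof.
elim: m => [|m IH] H d g w1 hH dataH mu_m [XH]; apply; split=> //.
- exists (data_list d g w1); split=> [|K hK agree]; first exact: (data_list_inL hH dataH).
  apply: NNPP => KH.
  by have [dK [gK [wK [_ lt]]]] := neighbour_measure_lt_exists hH dataH hK agree KH; lia.
- exists (data_list d g w1); split=> [|K XK agree]; first exact: (data_list_inL hH dataH).
  apply: NNPP => KH; have hK := cb_iter_sub (o := nat_bord m.+1) XK.
  have [dK [gK [wK [dataK lt]]]] := neighbour_measure_lt_exists hH dataH hK agree KH.
  by apply: (IH K dK gK wK hK dataK) XK; lia.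
Qed.
End UpperBound.

(** * The rank of Sub(L_{n,p}) *)

Section SubgroupSpace.
Variables p n : nat.
Hypothesis n_gt0 : (0 < n)%N.
Local Notation A := (int -> 'rV['F_p]_n).
Local Notation X := (cb_iter (@inL p n) (@is_subgroup p n)).

Lemma residue_family_zero d : residue_family d 0 (fun f : A => f = (fun _ => 0)).
Proof.
split=> [||_ ->|_ k -> //]; last exact: fin_supp0.
- split=> // [_ _ -> ->|_ ->]; apply: functional_extensionality => k.
  + by rewrite addr0.
  + by rewrite oppr0.
- by move=> _ ->; split.
Qed.

Lemma cb_iter_bomega : X bomega = @base_subgroup p n.
Proof.
apply: pred_ext => H; split=> [XH|]; last first.
  by apply: perfect_sub_cb_iter => [K []|K]; last exact: base_subgroup_not_isolated.
have hH : is_subgroup H := cb_iter_sub XH; split=> // x hx; apply: NNPP => x2.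
have [d [g [w1 dataH]]] := translation_data_exists hH (ex_intro _ x (conj hx x2)).
exact: (translation_data_not_cb_iter hH dataH (leqnn _) (XH (measure H d w1).+1)).
Qed.

Lemma Sub_CB_rank : is_CB_rank_space (@inL p n) (@is_subgroup p n) bomega.
Proof.
apply: cb_rank_bomega => [|m e].
  by rewrite cb_iter_bomega; apply: cb_deriv_perfect; apply: base_subgroup_not_isolated.
have stable := iter_stable_omega (iter := X) (step := cb_deriv (@inL p n)) (fun _ => erefl)
  (fun _ _ => conj id id) (fun _ _ => @proj1 _ _) e.
have := sdprod_subgroup_cb_iter n_gt0 (ltn0Sn m) (j := m) (a := 0%N) (leqnSn m)
  (residue_family_zero m.+1).
rewrite -stable cb_iter_bomega => -[_ /(_ (fun _ => 0, m.+1%:Z))].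
by move/(_ (conj (dvdzz _) erefl))/eqP.
Qed.
End SubgroupSpace.

Theorem theorem6p6 (p n : nat) (hp : prime p) (hn : (1 <= n)%N) :
  exists o : bord,
    is_CB_rank_space (@inL p n) (@is_subgroup p n) o /\
    is_CB_rank_poset Qset Qlt o.
Proof. by exists bomega; split; [apply: Sub_CB_rank|apply: Q_CB_rank]. Qed.
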